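(* Fix $\delta_1,\delta_2>0$ small with $\delta_1/\delta_2\in\mathbb{N}$ and $\delta_2<\delta_1^3$. There exists a function $g$ such that for all $k\in\mathbb{N}$, $\varepsilon>0$, every $m\in\mathbb{N}\cup\{\infty\}$ with $m>g(k,\varepsilon)$, and every group homomorphism $f:\ell^1(\mathbb{N}_{\le m};\mathbb{R}/\mathbb{Z})\to(\mathbb{R}/\mathbb{Z})^k$, there exists $s\in S_m$ with $|f(s)|<\varepsilon$ (i.e. $S_m$ meets the Bohr set $\{b: |f(b)|<\varepsilon\}$).
   Context: $\|x\|_{\mathbb{R}/\mathbb{Z}}$ is the distance from $x$ to the nearest integer. For $m\in\mathbb{N}$, $\ell^1(\mathbb{N}_{\le m};\mathbb{R}/\mathbb{Z})$ is the group $(\mathbb{R}/\mathbb{Z})^m$ with norm $\sum_{i\le m}\|a_i\|_{\mathbb{R}/\mathbb{Z}}$; for $m=\infty$ it is $\ell^1(\mathbb{N};\mathbb{R}/\mathbb{Z})$, the group of sequences $(a_1,a_2,\dots)$ in $\mathbb{R}/\mathbb{Z}$ with $\sum_i\|a_i\|_{\mathbb{R}/\mathbb{Z}}<\infty$ under coordinatewise addition. For $y\in(\mathbb{R}/\mathbb{Z})^k$, $|y|$ is the maximum of the $\mathbb{R}/\mathbb{Z}$-norms of its coordinates. Let $\eta_m=2^{-100m}$ for $m\in\mathbb{N}$ and $\eta_\infty=0$. $S_m$ is the set of $(a_1,a_2,\dots)\in\ell^1(\mathbb{N}_{\le m};\mathbb{R}/\mathbb{Z})$ for which there is an index $i$ with: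 (1) $a_i\in(-\delta_1-(2-\eta_m)\delta_2,\,-\delta_1+(2-\eta_m)\delta_2)\subset\mathbb{R}/\mathbb{Z}$; (2) for all $j\ne i$, $a_j\in(-(2-\eta_m)\delta_2,(2-\eta_m)\delta_2)\subset\mathbb{R}/\mathbb{Z}$; (3) $\delta_1-(2-\eta_m)\delta_2<\sum_{j\ne i}\|a_j\|_{\mathbb{R}/\mathbb{Z}}<\delta_1+(2-\eta_m)\delta_2$. *)

From Stdlib Require Import Reals Lra.
From Coquelicot Require Import Coquelicot.
Open Scope R_scope.

(* x is (the representative of) 0 in R/Z *)
Definition isInt (x : R) : Prop := exists n : Z, x = IZR n.

Definition distZ (x : R) : R :=
  Rmin (x - IZR (Int_part x)) (IZR (Int_part x) + 1 - x).

Definition inArc (x lo hi : R) : Prop := exists n : Z, lo < x + IZR n < hi.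

(* m in N ∪ {∞}: Some n = n, None = ∞ *)
Definition natinf := option nat.

(* index i is a coordinate of l^1(N_{<=m}); coordinates are numbered 0,1,...  *)
Definition idx (m : natinf) (i : nat) : Prop :=
  match m with Some n => (i < n)%nat | None => True end.

Fixpoint fsum (f : nat -> R) (n : nat) : R :=
  match n with O => 0 | S p => fsum f p + f p end.

(* Elements of l^1(N_{<=m}; R/Z) are represented by real sequences a : nat -> R
   (coordinatewise representatives); for finite m the coordinates >= m are 0 mod 1,
   for m = ∞ the sequence of norms is summable. *)
Definition inL1 (m : natinf) (a : nat -> R) : Prop :=
  match m with
  | Some n => forall i, (n <= i)%nat -> isInt (a i)
  | None => ex_series (fun i => distZ (a i))
  end.

Definition eqL1 (a b : nat -> R) : Prop := forall i, isInt (a i - b i).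

(* A group homomorphism f : l^1(N_{<=m}; R/Z) -> (R/Z)^k, given on representatives:
   F a j (j < k) is a representative of the j-th coordinate of f([a]). *)
Definition isHomRep (m : natinf) (k : nat) (F : (nat -> R) -> nat -> R) : Prop :=
  (forall a b, inL1 m a -> inL1 m b -> eqL1 a b ->
     forall j, (j < k)%nat -> isInt (F a j - F b j)) /\
  (forall a b, inL1 m a -> inL1 m b ->
     forall j, (j < k)%nat -> isInt (F (fun i => a i + b i) j - F a j - F b j)).

Definition eta (m : natinf) : R :=
  match m with Some n => / 2 ^ (100 * n) | None => 0 end.

Definition sumOthers (m : natinf) (a : nat -> R) (i : nat) : R :=
  let g := fun j => if Nat.eq_dec j i then 0 else distZ (a j) in
  match m with Some n => fsum g n | None => Series g end.

Definition inS (d1 d2 : R) (m : natinf) (a : nat -> R) : Prop :=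
  let w := (2 - eta m) * d2 in
  exists i, idx m i /\
    inArc (a i) (- d1 - w) (- d1 + w) /\
    (forall j, idx m j -> j <> i -> inArc (a j) (- w) w) /\
    d1 - w < sumOthers m a i < d1 + w.

Definition gtN (m : natinf) (g : nat) : Prop :=
  match m with Some n => (g < n)%nat | None => True end.

(** Put [q = δ1/δ2] and take [N > q/ε].  Colour each basis vector [δ2 e_n] by the
    cell of mesh [1/N] of the torus [(R/Z)^k] containing [f(δ2 e_n)]; among the
    first [N^k q + 1] of them the pigeonhole principle gives [q + 1] indices
    [i, j_1, ..., j_q] of one colour.  The element [s = δ2 Σ_j (e_j - e_i)] has
    coordinate [-δ1] at [i], [δ2] at each [j] and [0] elsewhere, so [s ∈ S_m], the
    norms of its other coordinates summing to exactly [δ1].  And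
    [f(s) = Σ_j (f(δ2 e_j) - f(δ2 e_i))] is a sum of [q] terms of norm at most [1/N],
    so [|f(s)| ≤ q/N < ε].  Thus [g(k, ε) = N^k q] works for all [δ1, δ2 < 1/4]. *)
From Stdlib Require Import Reals Lra Lia List.
From Coquelicot Require Import Coquelicot.
Open Scope R_scope.

Lemma isInt_add_eq x y z : isInt x -> isInt y -> z = x + y -> isInt z.
Proof. intros [n ->] [p ->] ->. exists (n + p)%Z. now rewrite plus_IZR. Qed.

Lemma isInt_sub_eq x y z : isInt x -> isInt y -> z = x - y -> isInt z.
Proof. intros [n ->] [p ->] ->. exists (n - p)%Z. now rewrite minus_IZR. Qed.

Lemma isInt_sub_refl x : isInt (x - x).
Proof. exists 0%Z. simpl. ring. Qed.

(** * The norm of R/Z *)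

Lemma distZ_le_Rabs x (n : Z) : distZ x <= Rabs (x - IZR n).
Proof.
  unfold distZ. destruct (base_Int_part x) as [Hlo Hhi].
  destruct (Z.le_gt_cases n (Int_part x)) as [Hn | Hn].
  - apply IZR_le in Hn. eapply Rle_trans; [apply Rmin_l|]. rewrite Rabs_right; lra.
  - assert (Hn' : IZR (Int_part x + 1) <= IZR n) by (apply IZR_le; lia).
    rewrite plus_IZR in Hn'. eapply Rle_trans; [apply Rmin_r|]. rewrite Rabs_left1; lra.
Qed.

Lemma distZ_attained x : exists n : Z, distZ x = Rabs (x - IZR n).
Proof.
  unfold distZ. destruct (base_Int_part x) as [Hlo Hhi].
  destruct (Rle_dec (x - IZR (Int_part x)) (IZR (Int_part x) + 1 - x)).
  - exists (Int_part x). rewrite Rmin_left, Rabs_right; lra.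
  - exists (Int_part x + 1)%Z. rewrite Rmin_right, plus_IZR, Rabs_left1; lra.
Qed.

Lemma distZ_triangle x y : distZ (x + y) <= distZ x + distZ y.
Proof.
  destruct (distZ_attained x) as [n ->], (distZ_attained y) as [p ->].
  eapply Rle_trans; [apply (distZ_le_Rabs _ (n + p))|].
  rewrite plus_IZR. replace (x + y - (IZR n + IZR p)) with ((x - IZR n) + (y - IZR p)) by ring.
  apply Rabs_triang.
Qed.

Lemma distZ_le_congr x y : isInt (x - y) -> distZ x <= distZ y.
Proof.
  intros [n Hn]. destruct (distZ_attained y) as [p ->].
  eapply Rle_trans; [apply (distZ_le_Rabs _ (n + p))|].
  rewrite plus_IZR. right. f_equal. lra.
Qed.

Lemma distZ_small x : 0 <= x <= 1/2 -> distZ x = x.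
Proof.
  intros Hx. unfold distZ.
  replace (Int_part x) with 0%Z by (apply Int_part_spec; simpl; lra).
  simpl. rewrite Rmin_left; lra.
Qed.

Lemma distZ_0 : distZ 0 = 0.
Proof. apply distZ_small. lra. Qed.

(** * Cells of mesh 1/N and the pigeonhole principle *)

Definition cell (N : nat) (x : R) : nat := Z.to_nat (Int_part (INR N * frac_part x)).

Lemma Int_part_grid N y : (0 < N)%nat -> 0 <= y < INR N ->
  (0 <= Int_part y)%Z /\ (Int_part y < Z.of_nat N)%Z.
Proof.
  intros HN Hy. destruct (base_Int_part y) as [Hlo Hhi]. split.
  - apply le_IZR. assert (-1 < IZR (Int_part y)) by lra.
    apply lt_IZR in H. apply IZR_le. lia.
  - apply lt_IZR. rewrite <- INR_IZR_INZ. lra.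
Qed.

Lemma frac_part_scaled_bounds N x : (0 < N)%nat -> 0 <= INR N * frac_part x < INR N.
Proof.
  intros HN. assert (0 < INR N) by (apply lt_0_INR; lia).
  destruct (base_fp x). nra.
Qed.

Lemma cell_lt N x : (0 < N)%nat -> (cell N x < N)%nat.
Proof.
  intros HN. unfold cell.
  destruct (Int_part_grid N _ HN (frac_part_scaled_bounds N x HN)). lia.
Qed.

Lemma cell_close N x y : (0 < N)%nat -> cell N x = cell N y -> distZ (x - y) <= / INR N.
Proof.
  intros HN Hxy. assert (HNr : 0 < INR N) by (apply lt_0_INR; lia).
  pose proof (Int_part_grid N _ HN (frac_part_scaled_bounds N x HN)) as Hx.
  pose proof (Int_part_grid N _ HN (frac_part_scaled_bounds N y HN)) as Hy.
  unfold cell in Hxy.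
  assert (Heq : Int_part (INR N * frac_part x) = Int_part (INR N * frac_part y)) by lia.
  destruct (base_Int_part (INR N * frac_part x)) as [Hx1 Hx2].
  destruct (base_Int_part (INR N * frac_part y)) as [Hy1 Hy2]. rewrite Heq in Hx1, Hx2.
  eapply Rle_trans; [apply (distZ_le_congr _ (frac_part x - frac_part y))|].
  - apply (isInt_sub_eq (IZR (Int_part x)) (IZR (Int_part y))); try (eexists; reflexivity).
    unfold frac_part. ring.
  - eapply Rle_trans; [apply (distZ_le_Rabs _ 0)|]. simpl.
    assert (Hinv : INR N * / INR N = 1) by (apply Rinv_r; lra).
    apply Rabs_le. split; apply (Rmult_le_reg_l (INR N)); auto; nra.
Qed.

Definition resolution (q : nat) (eps : R) : nat := S (Z.to_nat (up (INR q / eps))).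

Lemma resolution_pos q eps : (0 < resolution q eps)%nat.
Proof. unfold resolution. lia. Qed.

Lemma resolution_spec q eps : 0 < eps -> INR q * / INR (resolution q eps) < eps.
Proof.
  intros Heps. set (N := resolution q eps).
  assert (HN : INR q / eps < INR N).
  { unfold N, resolution. rewrite S_INR. destruct (archimed (INR q / eps)) as [Hup _].
    destruct (Z.lt_ge_cases (up (INR q / eps)) 0) as [Hneg | Hnn].
    - apply IZR_lt in Hneg. pose proof (pos_INR (Z.to_nat (up (INR q / eps)))). lra.
    - rewrite (INR_IZR_INZ (Z.to_nat _)), Znat.Z2Nat.id by lia. lra. }
  assert (HNr : 0 < INR N) by (apply lt_0_INR, resolution_pos).
  apply (Rmult_lt_compat_r eps) in HN; auto. unfold Rdiv in HN.
  rewrite Rmult_assoc, Rinv_l in HN by lra.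
  apply (Rmult_lt_reg_r (INR N)); auto. rewrite Rmult_assoc, Rinv_l by lra. lra.
Qed.

Definition monochromatic (col : nat -> nat) (l : list nat) : Prop :=
  forall n n', In n l -> In n' l -> col n = col n'.

Lemma monochromatic_sublist (col : nat -> nat) r N : forall l, NoDup l ->
  (forall n, In n l -> (col n < N)%nat) -> (N * r < length l)%nat ->
  exists l', incl l' l /\ NoDup l' /\ (r < length l')%nat /\ monochromatic col l'.
Proof.
  induction N as [|N IH]; intros l Hnd Hcol Hlen.
  - destruct l as [|n l]; simpl in Hlen; [lia|]. specialize (Hcol n (or_introl eq_refl)). lia.
  - set (top := filter (fun n => col n =? N) l).
    set (rest := filter (fun n => negb (col n =? N)) l).
    destruct (Nat.lt_ge_cases r (length top)) as [Htop | Htop].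
    + exists top. split; [apply incl_filter|]. split; [apply NoDup_filter; auto|].
      split; auto. intros n n' Hn Hn'. apply filter_In in Hn as [_ Hn], Hn' as [_ Hn'].
      apply Nat.eqb_eq in Hn, Hn'. congruence.
    + destruct (IH rest) as (l' & Hincl & Hl'). { apply NoDup_filter; auto. }
      { intros n Hn. apply filter_In in Hn as [Hn Hne]. specialize (Hcol n Hn).
        apply Bool.negb_true_iff, Nat.eqb_neq in Hne. lia. }
      { pose proof (filter_length (fun n => col n =? N) l). unfold top, rest in *. nia. }
      exists l'. split; auto. intros n Hn. exact (incl_filter _ l n (Hincl n Hn)).
Qed.

Lemma monochromatic_sublist_colors (col : nat -> nat -> nat) N :
  (forall n c, (col n c < N)%nat) ->
  forall K r l, NoDup l -> (N ^ K * r < length l)%nat ->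
  exists l', incl l' l /\ NoDup l' /\ (r < length l')%nat /\
    forall c, (c < K)%nat -> monochromatic (fun n => col n c) l'.
Proof.
  intros Hcol. induction K as [|K IH]; intros r l Hnd Hlen.
  - exists l. repeat split; auto using incl_refl. simpl in Hlen. lia. intros c Hc. lia.
  - destruct (IH (N * r)%nat l) as (l1 & Hincl1 & Hnd1 & Hlen1 & Hmono1); auto.
    { replace (N ^ K * (N * r))%nat with (N ^ S K * r)%nat by (simpl; ring). auto. }
    destruct (monochromatic_sublist (fun n => col n K) r N l1) as (l2 & Hincl2 & Hnd2 & Hlen2 & Hmono2);
      auto.
    exists l2. split; [intros n Hn; auto|]. repeat split; auto.
    intros c Hc n n' Hn Hn'. destruct (Nat.eq_dec c K) as [-> | HcK]; [auto|].
    apply Hmono1; auto; lia.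
Qed.

(** * Finitely supported sequences *)

Definition supported_below (M : nat) (a : nat -> R) : Prop := forall n, (M <= n)%nat -> a n = 0.

Definition natinf_ge (m : natinf) (M : nat) : Prop := forall n, m = Some n -> (M <= n)%nat.

Lemma natinf_ge_gtN m g : gtN m g -> natinf_ge m (S g).
Proof. destruct m; simpl; intros H p [= <-]. lia. Qed.

Lemma fsum_ext f h n : (forall j, (j < n)%nat -> f j = h j) -> fsum f n = fsum h n.
Proof.
  induction n as [|n IH]; intros H; simpl; [reflexivity|].
  rewrite IH, H; [reflexivity | lia | intros j Hj; apply H; lia].
Qed.

Lemma fsum_plus f h n : fsum (fun j => f j + h j) n = fsum f n + fsum h n.
Proof. induction n; simpl; [ring|]. rewrite IHn. ring. Qed.

Lemma fsum_supported M a n : supported_below M a -> (M <= n)%nat -> fsum a n = fsum a M.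
Proof.
  intros Ha. induction n; intros Hn; [now replace M with 0%nat by lia|].
  destruct (Nat.eq_dec M (S n)) as [-> | HMn]; auto.
  simpl. rewrite IHn, Ha by lia. ring.
Qed.

Lemma is_series_supported M a : supported_below M a -> is_series a (fsum a M).
Proof.
  intros Ha. change (is_lim_seq (sum_n a) (fsum a M)).
  apply is_lim_seq_ext_loc with (u := fun _ => fsum a M); [|apply is_lim_seq_const].
  exists M. intros n Hn. symmetry. rewrite <- (fsum_supported M a (S n)) by (auto; lia).
  clear. induction n; simpl; [rewrite sum_O; ring|]. now rewrite sum_Sn, IHn.
Qed.

Lemma inL1_supported m M a : natinf_ge m M -> supported_below M a -> inL1 m a.
Proof.
  intros HmM Ha. destruct m as [n|]; simpl.
  - intros i Hi. rewrite Ha by (specialize (HmM n eq_refl); lia). exists 0%Z. reflexivity.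
  - exists (fsum (fun i => distZ (a i)) M). apply is_series_supported.
    intros j Hj. now rewrite Ha, distZ_0.
Qed.

Lemma sumOthers_supported m M a i : natinf_ge m M -> supported_below M a ->
  sumOthers m a i = fsum (fun j => if Nat.eq_dec j i then 0 else distZ (a j)) M.
Proof.
  intros HmM Ha. set (g := fun j => if Nat.eq_dec j i then 0 else distZ (a j)).
  assert (Hg : supported_below M g).
  { intros j Hj. unfold g. destruct (Nat.eq_dec j i); auto. now rewrite Ha, distZ_0. }
  unfold sumOthers. destruct m as [n|].
  - apply fsum_supported; auto.
  - apply is_series_unique, is_series_supported; auto.
Qed.

Lemma supported_below_plus M a b :
  supported_below M a -> supported_below M b -> supported_below M (fun n => a n + b n).
Proof. intros Ha Hb n Hn. rewrite Ha, Hb by auto. ring. Qed.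

Lemma supported_below_minus M a b :
  supported_below M a -> supported_below M b -> supported_below M (fun n => a n - b n).
Proof. intros Ha Hb n Hn. rewrite Ha, Hb by auto. ring. Qed.

(** * The witness [δ2 Σ_{j ∈ js} (e_j - e_i)] *)

Definition spike (t : nat) (x : R) : nat -> R := fun n => if n =? t then x else 0.

Definition indicator (js : list nat) (x : R) : nat -> R :=
  fun n => if in_dec Nat.eq_dec n js then x else 0.

Definition witness (d : R) (i : nat) (js : list nat) : nat -> R :=
  fun n => if n =? i then - (INR (length js) * d) else indicator js d n.

Lemma spike_supported M t x : (t < M)%nat -> supported_below M (spike t x).
Proof. intros Ht n Hn. unfold spike. destruct (Nat.eqb_spec n t); [lia | auto]. Qed.

Lemma fsum_spike t x n : fsum (spike t x) n = if (t <? n)%nat then x else 0.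
Proof.
  induction n; simpl; [reflexivity|]. rewrite IHn. unfold spike.
  destruct (Nat.ltb_spec t n), (Nat.eqb_spec n t), (Nat.ltb_spec t (S n)); try lia; ring.
Qed.

Lemma indicator_cons j js x : ~ In j js ->
  forall n, indicator (j :: js) x n = spike j x n + indicator js x n.
Proof.
  intros Hj n. unfold indicator, spike.
  destruct (Nat.eqb_spec n j) as [-> | Hnj].
  - destruct (in_dec Nat.eq_dec j js); [tauto|].
    destruct (in_dec Nat.eq_dec j (j :: js)) as [_ | Hc]; [ring | now destruct Hc; left].
  - destruct (in_dec Nat.eq_dec n js), (in_dec Nat.eq_dec n (j :: js)) as [Hc | Hc];
      try ring.
    + now destruct Hc; right.
    + destruct Hc; [congruence | tauto].
Qed.

Lemma fsum_indicator js x M : NoDup js -> (forall t, In t js -> (t < M)%nat) ->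
  fsum (indicator js x) M = INR (length js) * x.
Proof.
  induction js as [|j js IH]; intros Hnd Hjs.
  - clear Hnd Hjs. simpl. induction M as [|M IHM]; simpl; [ring|]. rewrite IHM. unfold indicator. simpl. ring.
  - apply NoDup_cons_iff in Hnd as [Hj Hnd].
    rewrite (fsum_ext _ (fun n => spike j x n + indicator js x n)) by
      (intros; apply indicator_cons; auto).
    rewrite fsum_plus, IH, fsum_spike by (auto; intros; apply Hjs; simpl; auto).
    destruct (Nat.ltb_spec j M) as [_ | Hc]; [|specialize (Hjs j (or_introl eq_refl)); lia].
    cbn [length]. rewrite S_INR. ring.
Qed.

Lemma witness_nil d i n : witness d i nil n = 0.
Proof. unfold witness, indicator. simpl. destruct (n =? i); ring. Qed.

Lemma witness_cons d i j js : NoDup (i :: j :: js) ->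
  forall n, witness d i (j :: js) n = (spike j d n - spike i d n) + witness d i js n.
Proof.
  intros Hnd n. apply NoDup_cons_iff in Hnd as [Hi Hnd]. apply NoDup_cons_iff in Hnd as [Hj _].
  unfold witness. rewrite indicator_cons by auto. unfold spike, indicator.
  destruct (Nat.eqb_spec n i) as [-> | Hni].
  - destruct (Nat.eqb_spec i j) as [-> | _]; [now destruct Hi; left|].
    cbn [length]. rewrite S_INR. ring.
  - destruct (n =? j); ring.
Qed.

Lemma witness_supported d i js M : (i < M)%nat -> (forall t, In t js -> (t < M)%nat) ->
  supported_below M (witness d i js).
Proof.
  intros Hi Hjs n Hn. unfold witness, indicator.
  destruct (Nat.eqb_spec n i); [lia|].
  destruct (in_dec Nat.eq_dec n js) as [Hin | _]; auto. specialize (Hjs n Hin). lia.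
Qed.

Lemma eta_bounds m : natinf_ge m 1 -> 0 <= eta m < 1.
Proof.
  intros Hm. destruct m as [n|]; unfold eta; [|lra]. specialize (Hm n eq_refl).
  assert (1 < 2 ^ (100 * n)) by (apply Rlt_pow_R1; [lra | lia]).
  split; [left; apply Rinv_0_lt_compat; lra|].
  rewrite <- Rinv_1. apply Rinv_lt_contravar; lra.
Qed.

Lemma sumOthers_witness m M d i js : 0 <= d <= 1/2 -> NoDup (i :: js) -> natinf_ge m M ->
  (i < M)%nat -> (forall t, In t js -> (t < M)%nat) ->
  sumOthers m (witness d i js) i = INR (length js) * d.
Proof.
  intros Hd Hnd HmM Hi Hjs. apply NoDup_cons_iff in Hnd as [Hnotin Hnd].
  rewrite (sumOthers_supported m M) by (auto using witness_supported).
  rewrite <- fsum_indicator with (M := M) by auto. apply fsum_ext.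
  intros j _. unfold witness, indicator.
  destruct (Nat.eq_dec j i) as [-> | Hji].
  - destruct (in_dec Nat.eq_dec i js); tauto.
  - destruct (Nat.eqb_spec j i); [tauto|].
    destruct (in_dec Nat.eq_dec j js); apply distZ_small; lra.
Qed.

Lemma inS_witness m M d i js : 0 < d <= 1/2 -> NoDup (i :: js) -> natinf_ge m M ->
  (i < M)%nat -> (forall t, In t js -> (t < M)%nat) ->
  inS (INR (length js) * d) d m (witness d i js).
Proof.
  intros Hd Hnd HmM Hi Hjs.
  destruct (eta_bounds m) as [Heta0 Heta1]. { intros n Hn. specialize (HmM n Hn). lia. }
  assert (Hw : d < (2 - eta m) * d) by nra.
  exists i. rewrite (sumOthers_witness m M) by (auto; lra). repeat split; try lra.
  - destruct m as [n|]; simpl; auto. specialize (HmM n eq_refl). lia.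
  - exists 0%Z. unfold witness. rewrite Nat.eqb_refl. simpl. lra.
  - intros j _ Hji. exists 0%Z. unfold witness, indicator. simpl.
    destruct (Nat.eqb_spec j i); [tauto|]. destruct (in_dec Nat.eq_dec j js); lra.
Qed.

Section Homomorphism.

Variables (m : natinf) (k M c : nat) (F : (nat -> R) -> nat -> R).
Hypotheses (HF : isHomRep m k F) (HmM : natinf_ge m M) (Hc : (c < k)%nat).

Lemma hom_ext a b : supported_below M a -> supported_below M b ->
  (forall n, a n = b n) -> isInt (F a c - F b c).
Proof.
  intros Ha Hb Hab. apply (proj1 HF); auto; try apply (inL1_supported m M); auto.
  intros n. rewrite Hab. apply isInt_sub_refl.
Qed.

Lemma hom_add a b : supported_below M a -> supported_below M b ->
  isInt (F (fun n => a n + b n) c - F a c - F b c).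
Proof. intros Ha Hb. apply (proj2 HF); auto; apply (inL1_supported m M); auto. Qed.

Lemma hom_zero : isInt (F (fun _ => 0) c).
Proof.
  assert (H0 : supported_below M (fun _ => 0)) by (intros n _; reflexivity).
  apply (isInt_sub_eq (F (fun n => 0 + 0) c - F (fun _ => 0) c)
                      (F (fun n => 0 + 0) c - F (fun _ => 0) c - F (fun _ => 0) c)).
  - apply hom_ext; auto using supported_below_plus. intros n. cbv beta. ring.
  - apply hom_add; auto.
  - ring.
Qed.

Lemma hom_sub a b : supported_below M a -> supported_below M b ->
  isInt (F (fun n => a n - b n) c - (F a c - F b c)).
Proof.
  intros Ha Hb.
  set (Fs := F (fun n => (a n - b n) + b n) c).
  apply (isInt_sub_eq (Fs - F a c) (Fs - F (fun n => a n - b n) c - F b c)).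
  - apply hom_ext; auto using supported_below_plus, supported_below_minus.
    intros n. ring.
  - apply hom_add; auto using supported_below_minus.
  - ring.
Qed.

Lemma distZ_hom_witness d i js e : NoDup (i :: js) -> (i < M)%nat ->
  (forall t, In t js -> (t < M)%nat) ->
  (forall t, In t js -> distZ (F (spike t d) c - F (spike i d) c) <= e) ->
  distZ (F (witness d i js) c) <= INR (length js) * e.
Proof.
  induction js as [|j js IH]; intros Hnd Hi Hjs Hclose.
  - eapply Rle_trans; [apply (distZ_le_congr _ 0)|].
    + apply (isInt_add_eq (F (witness d i nil) c - F (fun _ => 0) c) (F (fun _ => 0) c)).
      * apply hom_ext; [apply witness_supported; auto | intros n _; reflexivity | apply witness_nil].
      * apply hom_zero.
      * ring.
    + rewrite distZ_0. simpl. lra.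
  - assert (Hnd' : NoDup (i :: js)) by exact (NoDup_remove_1 (i :: nil) js j Hnd).
    assert (Hj : (j < M)%nat) by (apply Hjs; left; reflexivity).
    set (a := fun n => spike j d n - spike i d n).
    set (b := witness d i js).
    assert (Ha : supported_below M a) by (apply supported_below_minus; apply spike_supported; auto).
    assert (Hb : supported_below M b) by (apply witness_supported; auto; intros; apply Hjs; right; auto).
    assert (Hstep : isInt (F (witness d i (j :: js)) c
                           - ((F (spike j d) c - F (spike i d) c) + F b c))).
    { apply (isInt_add_eq (F (witness d i (j :: js)) c - F (fun n => a n + b n) c)
               ((F (fun n => a n + b n) c - F a c - F b c)
                + (F a c - (F (spike j d) c - F (spike i d) c)))).
      - apply hom_ext; auto using witness_supported, supported_below_plus.
        apply witness_cons; auto.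
      - eapply isInt_add_eq; [apply (hom_add a b Ha Hb) | | reflexivity].
        apply hom_sub; apply spike_supported; auto.
      - ring. }
    eapply Rle_trans; [apply (distZ_le_congr _ _ Hstep)|].
    eapply Rle_trans; [apply distZ_triangle|].
    cbn [length]. rewrite S_INR.
    assert (distZ (F b c) <= INR (length js) * e)
      by (apply IH; auto; intros t Ht; [apply Hjs | apply Hclose]; right; auto).
    assert (distZ (F (spike j d) c - F (spike i d) c) <= e) by (apply Hclose; left; auto).
    lra.
Qed.

End Homomorphism.

Lemma clustered_indices (F : (nat -> R) -> nat -> R) d k q N : (0 < N)%nat ->
  exists i js, NoDup (i :: js) /\ length js = q /\
    (forall t, In t (i :: js) -> (t < S (N ^ k * q))%nat) /\
    forall c, (c < k)%nat -> forall t, In t js ->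
      distZ (F (spike t d) c - F (spike i d) c) <= / INR N.
Proof.
  intros HN. set (col := fun n c => cell N (F (spike n d) c)).
  destruct (monochromatic_sublist_colors col N (fun n c => cell_lt N _ HN) k q
              (seq 0 (S (N ^ k * q)))) as ([|i rest] & Hincl & Hnd & Hlen & Hmono).
  { apply seq_NoDup. } { rewrite length_seq. lia. } { simpl in Hlen. lia. }
  set (js := firstn q rest).
  assert (Hsplit : js ++ skipn q rest = rest) by apply firstn_skipn.
  assert (Hjs : incl js rest) by (intros t Ht; rewrite <- Hsplit; apply in_or_app; auto).
  assert (Hsub : incl (i :: js) (i :: rest)) by (apply incl_cons; [left | apply incl_tl]; auto).
  exists i, js. repeat split.
  - apply NoDup_cons_iff in Hnd as [Hi Hrest]. constructor.
    + intros Hin. apply Hi, Hjs, Hin.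
    + apply (NoDup_app_remove_r _ (skipn q rest)). rewrite Hsplit. exact Hrest.
  - unfold js. rewrite length_firstn. simpl in Hlen. lia.
  - intros t Ht. apply Hsub, Hincl, in_seq in Ht. lia.
  - intros c Hc t Ht. apply cell_close; auto. apply (Hmono c Hc); apply Hsub; [right | left]; auto.
Qed.

Theorem mainTheorem3 :
  exists c : R, 0 < c /\
  forall d1 d2 : R, 0 < d1 -> d1 < c -> 0 < d2 -> d2 < c ->
    (exists q : nat, d1 = INR q * d2) -> d2 < d1 ^ 3 ->
    exists g : nat -> R -> nat,
      forall (k : nat) (eps : R), 0 < eps ->
      forall m : natinf, gtN m (g k eps) ->
      forall F : (nat -> R) -> nat -> R, isHomRep m k F ->
        exists s : nat -> R, inL1 m s /\ inS d1 d2 m s /\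
          (forall j, (j < k)%nat -> distZ (F s j) < eps).
Proof.
  exists (1/4). split; [lra|]. intros d1 d2 _ _ Hd2 Hd2c [q ->] _.
  exists (fun k eps => (resolution q eps ^ k * q)%nat). intros k eps Heps m Hm F HF.
  set (N := resolution q eps). set (M := S (N ^ k * q)).
  assert (HmM : natinf_ge m M) by (apply natinf_ge_gtN; exact Hm).
  destruct (clustered_indices F d2 k q N (resolution_pos q eps))
    as (i & js & Hnd & Hlen & HM & Hclose).
  assert (Hi : (i < M)%nat) by (apply HM; left; reflexivity).
  assert (Hjs : forall t, In t js -> (t < M)%nat) by (intros; apply HM; right; auto).
  exists (witness d2 i js). split; [|split].
  - apply (inL1_supported m M); auto using witness_supported.
  - rewrite <- Hlen. apply (inS_witness m M); auto. lra.
  - intros c Hc. eapply Rle_lt_trans.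
    + apply (distZ_hom_witness m k M c F); auto.
    + rewrite Hlen. apply resolution_spec; auto.
Qed.
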